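(* Let $\mathcal{R}$ be a commutative ring with unity, $P$ a connected locally finite poset in which every maximal chain has at least three elements, and $b$ an additive biderivation of $I(P,\mathcal{R})$. Let $r_1,r_2\in\mathcal{R}$ and $x\le y$, $u\le v$ in $P$ be such that any two of $x,y,u,v$ are comparable, $x\neq v$ and $y\neq u$. Then $b(r_1e_{xy},r_2e_{uv})=0$, except possibly in the case where $x=y\neq u=v$ and one of $x,u$ is a maximal element of $P$ and the other is a minimal element of $P$.
   Context: $I(P,\mathcal{R})$ is the incidence algebra: functions $f:P\times P\to\mathcal{R}$ with $f(x,y)=0$ unless $x\le y$, with product $(fg)(x,y)=\sum_{x\le z\le y}f(x,z)g(z,y)$; $e_{xy}$ ($x\le y$) is the function equal to $1$ at $(x,y)$ and $0$ elsewhere. An additive biderivation is a map $b$ of two arguments, additive in each, with $b(\alpha\beta,\gamma)=\alpha b(\beta,\gamma)+b(\alpha,\gamma)\beta$ and $b(\alpha,\beta\gamma)=\beta b(\alpha,\gamma)+b(\alpha,\beta)\gamma$. $P$ is connected if any two elements are joined by a finite sequence of successively comparable elements. A maximal chain is a totally ordered subset to which no element of $P$ can be added keeping it totally ordered. *)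

From HB Require Import structures.
From mathcomp Require Import all_boot all_order all_algebra.
Set Implicit Arguments. Unset Strict Implicit. Unset Printing Implicit Defensive.
Import Order.TTheory GRing.Theory.

Section IncidenceDefs.
Variables (d : Order.disp_t) (P : porderType d) (R : comPzRingType).

Definition cmp (a b : P) : bool := ((a <= b)%O || (b <= a)%O).

(* locally finite, witnessed by duplicate-free enumerations of all intervals [x,y] *)
Definition interval_enum (itv : P -> P -> seq P) : Prop :=
  forall x y, uniq (itv x y) /\ forall z, (z \in itv x y) = ((x <= z)%O && (z <= y)%O).

Definition connected_poset : Prop :=
  forall x y : P, exists s : seq P, path cmp x s /\ last x s = y.

Definition is_chain (C : P -> Prop) : Prop :=
  forall a b, C a -> C b -> cmp a b.

Definition maximal_chain (C : P -> Prop) : Prop :=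
  is_chain C /\ forall z, is_chain (fun a => C a \/ a = z) -> C z.

Definition chains_ge3 : Prop :=
  forall C, maximal_chain C ->
    exists a b c, [/\ C a, C b, C c & [/\ a <> b, a <> c & b <> c]].

Definition maximal_elt (x : P) : Prop := forall z, (x <= z)%O -> z = x.
Definition minimal_elt (x : P) : Prop := forall z, (z <= x)%O -> z = x.

Definition in_incidence (f : P -> P -> R) : Prop :=
  forall x y, ~~ (x <= y)%O -> f x y = 0%R.

Definition inc_add (f g : P -> P -> R) : P -> P -> R := fun x y => (f x y + g x y)%R.

Definition inc_mul (itv : P -> P -> seq P) (f g : P -> P -> R) : P -> P -> R :=
  fun x y => (\sum_(z <- itv x y) f x z * g z y)%R.

Definition sc_e (r : R) (x y : P) : P -> P -> R :=
  fun p q => if (p == x) && (q == y) then r else 0%R.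

Definition is_biderivation (itv : P -> P -> seq P)
    (b : (P -> P -> R) -> (P -> P -> R) -> (P -> P -> R)) : Prop :=
  [/\ forall f g, in_incidence f -> in_incidence g -> in_incidence (b f g),
      forall f g h, in_incidence f -> in_incidence g -> in_incidence h ->
        forall p q, b (inc_add f g) h p q = (b f h p q + b g h p q)%R,
      forall f g h, in_incidence f -> in_incidence g -> in_incidence h ->
        forall p q, b f (inc_add g h) p q = (b f g p q + b f h p q)%R,
      forall f g h, in_incidence f -> in_incidence g -> in_incidence h ->
        forall p q, b (inc_mul itv f g) h p q =
          (inc_mul itv f (b g h) p q + inc_mul itv (b f h) g p q)%R &
      forall f g h, in_incidence f -> in_incidence g -> in_incidence h ->
        forall p q, b f (inc_mul itv g h) p q =
          (inc_mul itv g (b f h) p q + inc_mul itv (b f g) h p q)%R].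

End IncidenceDefs.

From mathcomp Require Import all_boot all_order all_algebra.
From Stdlib Require Import FunctionalExtensionality Classical.
Set Implicit Arguments. Unset Strict Implicit. Unset Printing Implicit Defensive.
Import Order.TTheory GRing.Theory.
Local Open Scope ring_scope.

(* Write f = r1 e_xy and g = r2 e_uv.  Expanding b(e_xx f, g), b(f, g e_vv), b(f e_yy, g)
   and b(f, e_uu g) by the Leibniz rules shows that b(f,g) vanishes off the entries
   (u,y) and (x,v), where it equals r2 b(e_xx,e_vv)(v,x) r1 and r1 b(e_yy,e_uu)(y,u) r2,
   except at (x,y) when (x,y) = (u,v).  If ac = ca = 0, Bresar's identity
   (hk - kh) b(w,z) = b(h,k) (wz - zw), applied to the pairs (a,c) and (e_ss,e_st) with
   s < t in either order, gives b(a,c) e_st = e_st b(a,c) = 0; hence b(a,c)(p,q) <> 0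
   forces p minimal and q maximal.
   For b(e_xx,e_vv)(v,x) this means that v is minimal and x maximal, so x = y and u = v:
   the excluded case.  When (x,y) = (u,v) with x minimal and y maximal, the chain {x,y}
   is not maximal, so some z lies strictly between, and e_xy = e_xz e_zy reduces
   b(f,g)(x,y) to entries at non-extremal points. *)

Section IncidenceAlgebra.
Variables (d : Order.disp_t) (P : porderType d) (R : comPzRingType).
Variable itv : P -> P -> seq P.
Hypothesis hitv : interval_enum itv.

Local Notation inc := (@in_incidence d P R).
Local Notation mul := (inc_mul itv).

Lemma fun2_ext (f g : P -> P -> R) : (forall p q, f p q = g p q) -> f = g.
Proof. by move=> fg; do 2!apply: functional_extensionality => ?; apply: fg. Qed.

Lemma mem_itv p q z : (z \in itv p q) = (p <= z <= q)%O.
Proof. by case: (hitv p q) => _ ->. Qed.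

Lemma uniq_itv p q : uniq (itv p q).
Proof. by case: (hitv p q). Qed.

Lemma big_itv_sub p q a c (F : P -> R) : (p <= a)%O -> (c <= q)%O ->
  \sum_(z <- itv a c) F z = \sum_(z <- itv p q | (a <= z <= c)%O) F z.
Proof.
move=> pa cq; rewrite -[RHS]big_filter; apply: perm_big; apply: uniq_perm.
- exact: uniq_itv.
- by rewrite filter_uniq ?uniq_itv.
move=> z; rewrite mem_filter !mem_itv; case/boolP: (a <= z <= c)%O => //=.
by case/andP=> az zc; rewrite (le_trans pa az) (le_trans zc cq).
Qed.

Lemma inc_mulA (f g h : P -> P -> R) : mul f (mul g h) = mul (mul f g) h.
Proof.
apply: fun2_ext => p q; rewrite /inc_mul.
transitivity (\sum_(z <- itv p q) \sum_(w <- itv p q)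
   (if (z <= w)%O then f p z * (g z w * h w q) else 0)).
  apply: eq_big_seq => z; rewrite mem_itv => /andP[pz zq].
  rewrite big_distrr (big_itv_sub _ pz (lexx q)) big_mkcond big_seq [RHS]big_seq.
  by apply: eq_bigr => w; rewrite mem_itv => /andP[_ ->]; rewrite andbT.
rewrite exchange_big; apply: eq_big_seq => w; rewrite mem_itv => /andP[pw wq].
rewrite big_distrl (big_itv_sub _ (lexx p) wq) [RHS]big_mkcond big_seq [RHS]big_seq.
apply: eq_bigr => z; rewrite mem_itv => /andP[-> _] /=.
by case: ifP => _; rewrite ?mulrA ?mul0r.
Qed.

Lemma inc_mul_incidence (f g : P -> P -> R) : inc (mul f g).
Proof.
move=> p q npq; rewrite /inc_mul big_seq big1 // => z.
by rewrite mem_itv => /andP[pz zq]; move: npq; rewrite (le_trans pz zq).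
Qed.

Lemma inc_mulDl (f g h : P -> P -> R) p q :
  mul (inc_add f g) h p q = mul f h p q + mul g h p q.
Proof. by rewrite /inc_mul -big_split; apply: eq_bigr => z _; rewrite mulrDl. Qed.

Lemma inc_mulDr (f g h : P -> P -> R) p q :
  mul f (inc_add g h) p q = mul f g p q + mul f h p q.
Proof. by rewrite /inc_mul -big_split; apply: eq_bigr => z _; rewrite mulrDr. Qed.

Lemma inc_mul0l (f g : P -> P -> R) p q : (forall s t, f s t = 0) -> mul f g p q = 0.
Proof. by move=> f0; rewrite /inc_mul big1 // => z _; rewrite f0 mul0r. Qed.

Lemma inc_mul0r (f g : P -> P -> R) p q : (forall s t, g s t = 0) -> mul f g p q = 0.
Proof. by move=> g0; rewrite /inc_mul big1 // => z _; rewrite g0 mulr0. Qed.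

Lemma sum_if_eq_uniq (s : seq P) y (c : R) : uniq s ->
  \sum_(z <- s) (if z == y then c else 0) = if y \in s then c else 0.
Proof.
move=> us; case: (boolP (y \in s)) => ys.
  rewrite (big_rem y ys) /= eqxx big1_seq ?addr0 // => z /andP[_].
  by case: eqP => // ->; rewrite mem_rem_uniq // inE eqxx.
by rewrite big1_seq // => z /andP[_ zs]; case: eqP => // zy; rewrite -zy zs in ys.
Qed.

Lemma sc_e_incidence (r : R) x y : (x <= y)%O -> inc (sc_e r x y).
Proof. by move=> xy p q; rewrite /sc_e; case: andP => // -[/eqP-> /eqP->]; rewrite xy. Qed.

Lemma inc_mul_sc_el (r : R) x y (h : P -> P -> R) p q : (x <= y)%O -> inc h ->
  mul (sc_e r x y) h p q = if p == x then r * h y q else 0.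
Proof.
move=> xy hh; rewrite /inc_mul /sc_e; case: eqP => [->|_]; last first.
  by rewrite big1 // => z _; rewrite mul0r.
rewrite (eq_bigr (fun z => if z == y then r * h y q else 0)); last first.
  by move=> z _ /=; case: eqP => [->|]; rewrite ?mul0r.
rewrite sum_if_eq_uniq ?uniq_itv // mem_itv xy /=.
by case: ifP => // yq; rewrite hh ?yq // mulr0.
Qed.

Lemma inc_mul_sc_er (r : R) x y (h : P -> P -> R) p q : (x <= y)%O -> inc h ->
  mul h (sc_e r x y) p q = if q == y then h p x * r else 0.
Proof.
move=> xy hh; rewrite /inc_mul /sc_e; case: eqP => [->|_]; last first.
  by rewrite big1 // => z _; rewrite andbF mulr0.
rewrite (eq_bigr (fun z => if z == x then h p x * r else 0)); last first.
  by move=> z _; rewrite andbT; case: eqP => [->|]; rewrite ?mulr0.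
rewrite sum_if_eq_uniq ?uniq_itv // mem_itv xy andbT.
by case: ifP => // px; rewrite hh ?px // mul0r.
Qed.

Lemma sc_e_mul (r s : R) a a' c c' : (a <= a')%O -> (c <= c')%O ->
  mul (sc_e r a a') (sc_e s c c') =
  if a' == c then sc_e (r * s) a c' else fun _ _ => 0.
Proof.
move=> aa' cc'; apply: fun2_ext => p q.
rewrite inc_mul_sc_el //; last exact: sc_e_incidence.
rewrite /sc_e; case: (a' == c) => /=; last by rewrite mulr0 if_same.
by case: (p == a); case: (q == c'); rewrite ?mulr0.
Qed.

Lemma sc_e_mul1l (r : R) x y : (x <= y)%O -> mul (sc_e 1 x x) (sc_e r x y) = sc_e r x y.
Proof. by move=> xy; rewrite sc_e_mul // eqxx mul1r. Qed.

Lemma sc_e_mul1r (r : R) x y : (x <= y)%O -> mul (sc_e r x y) (sc_e 1 y y) = sc_e r x y.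
Proof. by move=> xy; rewrite sc_e_mul // eqxx mulr1. Qed.

Lemma sc_e_mul_neq (r s : R) a a' c c' : (a <= a')%O -> (c <= c')%O -> a' != c ->
  forall p q, mul (sc_e r a a') (sc_e s c c') p q = 0.
Proof. by move=> aa' cc' a'c p q; rewrite sc_e_mul // (negbTE a'c). Qed.

End IncidenceAlgebra.

Lemma chains_ge3_between d (P : porderType d) (x y : P) :
  chains_ge3 P -> minimal_elt x -> maximal_elt y -> (x <= y)%O -> x != y ->
  exists z, [/\ (x <= z)%O, (z <= y)%O, z != x & z != y].
Proof.
move=> hch xmin ymax xy xNy; apply: NNPP => noz.
pose C a := a = x \/ a = y.
have maxC : maximal_chain C.
  split=> [a c [->|->] [->|->]|z zC]; rewrite /cmp ?lexx ?xy ?orbT //.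
  have /orP[xz|zx] := zC x z (or_introl (or_introl erefl)) (or_intror erefl);
    last by left; apply: xmin.
  have /orP[yz|zy] := zC y z (or_introl (or_intror erefl)) (or_intror erefl);
    first by right; apply: ymax.
  case: (eqVneq z x) => [|zNx]; first by left.
  case: (eqVneq z y) => [|zNy]; first by right.
  by case: noz; exists z.
have [a1 [a2 [a3 [C1 C2 C3 [a12 a13 a23]]]]] := hch C maxC.
by move: a12 a13 a23; case: C1 => ->; case: C2 => ->; case: C3 => ->.
Qed.

Section Biderivation.
Variables (d : Order.disp_t) (P : porderType d) (R : comPzRingType).
Variable itv : P -> P -> seq P.
Hypothesis hitv : interval_enum itv.
Variable b : (P -> P -> R) -> (P -> P -> R) -> (P -> P -> R).
Hypothesis hb : is_biderivation itv b.

Local Notation inc := (@in_incidence d P R).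
Local Notation mul := (inc_mul itv).

Lemma bider_incidence f g : inc f -> inc g -> inc (b f g).
Proof. by case: hb => hbI _ _ _ _; apply: hbI. Qed.

Lemma biderMl f g h : inc f -> inc g -> inc h ->
  b (mul f g) h = inc_add (mul f (b g h)) (mul (b f h) g).
Proof. by case: hb => _ _ _ hbM _ *; apply: fun2_ext => p q; apply: hbM. Qed.

Lemma biderMr f g h : inc f -> inc g -> inc h ->
  b f (mul g h) = inc_add (mul g (b f h)) (mul (b f g) h).
Proof. by case: hb => _ _ _ _ hbM *; apply: fun2_ext => p q; apply: hbM. Qed.

Lemma addr_cancel_cross (a a' c1 c2 s t : R) :
  a + c1 + (c2 + s) = a' + c2 + (c1 + t) -> a + s = a' + t.
Proof.
move=> h; apply: (addIr (c1 + c2)).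
by rewrite addrACA [s + c2]addrC h [c1 + c2]addrC [RHS]addrACA [t + c1]addrC.
Qed.

(* Bresar's identity: expand b(xu, yv) with either argument's Leibniz rule first. *)
Lemma bider_commutator x y u v p q : inc x -> inc y -> inc u -> inc v ->
  mul (mul x y) (b u v) p q + mul (b x y) (mul v u) p q =
  mul (mul y x) (b u v) p q + mul (b x y) (mul u v) p q.
Proof.
move=> ix iy iu iv; have mi := @inc_mul_incidence d P R itv hitv.
have := congr1 (fun F => F p q)
  (etrans (esym (biderMl ix iu (mi y v))) (biderMr (mi x u) iy iv)).
rewrite (biderMr iu iy iv) (biderMr ix iy iv) (biderMl ix iu iv) (biderMl ix iu iy).
rewrite /inc_add !inc_mulDr !inc_mulDl !(inc_mulA hitv).
exact: addr_cancel_cross.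
Qed.

Section Orthogonal.
Variables f g : P -> P -> R.
Hypotheses (hf : inc f) (hg : inc g).
Hypotheses (fg0 : forall p q, mul f g p q = 0) (gf0 : forall p q, mul g f p q = 0).

Lemma bider_orth_nonmax p a c : (a <= c)%O -> a != c -> b f g p a = 0.
Proof.
move=> ac nac.
have ca0 s t : mul (sc_e (1 : R) a c) (sc_e 1 a a) s t = 0.
  by rewrite (sc_e_mul_neq hitv) // eq_sym.
have := bider_commutator p c hf hg (sc_e_incidence 1 (lexx a)) (sc_e_incidence 1 ac).
rewrite (inc_mul0l _ _ _ _ fg0) (inc_mul0l _ _ _ _ gf0) (inc_mul0r _ _ _ _ ca0) add0r.
rewrite sc_e_mul1l // (inc_mul_sc_er hitv) ?eqxx ?mulr1 ?add0r //.
exact: bider_incidence.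
Qed.

Lemma bider_orth_nonmin a c q : (a <= c)%O -> a != c -> b f g c q = 0.
Proof.
move=> ac nac.
have ca0 s t : mul (sc_e (1 : R) a c) (sc_e 1 a a) s t = 0.
  by rewrite (sc_e_mul_neq hitv) // eq_sym.
have := bider_commutator a q (sc_e_incidence 1 (lexx a)) (sc_e_incidence 1 ac) hf hg.
rewrite (inc_mul0r _ _ _ _ fg0) (inc_mul0r _ _ _ _ gf0) (inc_mul0l _ _ _ _ ca0) !addr0.
rewrite sc_e_mul1l // (inc_mul_sc_el hitv) ?eqxx ?mul1r //.
exact: bider_incidence.
Qed.

Lemma bider_orth_support p q : b f g p q != 0 -> minimal_elt p /\ maximal_elt q.
Proof.
move=> nz; split=> z.
  move=> zp; apply: NNPP => zNp; move: nz; rewrite (bider_orth_nonmin _ zp) ?eqxx //.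
  exact/eqP.
move=> qz; apply: NNPP => zNq; move: nz; rewrite (bider_orth_nonmax _ qz) ?eqxx //.
by apply/eqP => qEz; apply: zNq; rewrite qEz.
Qed.

End Orthogonal.

Lemma bider_sc_e_off_corner (r1 r2 : R) x y u v p q :
  (x <= y)%O -> (u <= v)%O -> x != v ->
  b (sc_e 1 x x) (sc_e 1 v v) v x = 0 -> (p != x) || (q != v) ->
  b (sc_e r1 x y) (sc_e r2 u v) p q = 0.
Proof.
move=> xy uv xv bxv0.
have i1 a : inc (sc_e (1 : R) a a) := sc_e_incidence 1 (lexx a).
have hf : inc (sc_e r1 x y) := sc_e_incidence r1 xy.
have hg : inc (sc_e r2 u v) := sc_e_incidence r2 uv.
have bxg0 s : b (sc_e 1 x x) (sc_e r2 u v) s x = 0.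
  rewrite -(sc_e_mul1r hitv r2 uv) (biderMr (i1 x) hg (i1 v)) /inc_add.
  rewrite (inc_mul_sc_el hitv _ _ _ uv (bider_incidence (i1 x) (i1 v))) bxv0 mulr0 if_same.
  by rewrite (inc_mul_sc_er hitv _ _ _ (lexx v) (bider_incidence (i1 x) hg)) (negbTE xv) addr0.
have bfv0 t : b (sc_e r1 x y) (sc_e 1 v v) v t = 0.
  rewrite -(sc_e_mul1l hitv r1 xy) (biderMl (i1 x) hf (i1 v)) /inc_add.
  rewrite (inc_mul_sc_el hitv _ _ _ (lexx x) (bider_incidence hf (i1 v))) eq_sym (negbTE xv).
  by rewrite (inc_mul_sc_er hitv _ _ _ xy (bider_incidence (i1 x) (i1 v))) bxv0 mul0r if_same add0r.
case/orP => [px|qv].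
  rewrite -(sc_e_mul1l hitv r1 xy) (biderMl (i1 x) hf hg) /inc_add.
  rewrite (inc_mul_sc_el hitv _ _ _ (lexx x) (bider_incidence hf hg)) (negbTE px).
  by rewrite (inc_mul_sc_er hitv _ _ _ xy (bider_incidence (i1 x) hg)) bxg0 mul0r if_same add0r.
rewrite -(sc_e_mul1r hitv r2 uv) (biderMr hf hg (i1 v)) /inc_add.
rewrite (inc_mul_sc_el hitv _ _ _ uv (bider_incidence hf (i1 v))) bfv0 mulr0 if_same.
by rewrite (inc_mul_sc_er hitv _ _ _ (lexx v) (bider_incidence hf hg)) (negbTE qv) addr0.
Qed.

Lemma bider_idem_corner x y u v : (x <= y)%O -> (u <= v)%O -> x != v ->
  ~ [/\ x = y, u = v, maximal_elt x & minimal_elt u] ->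
  b (sc_e 1 x x) (sc_e 1 v v) v x = 0.
Proof.
move=> xy uv xv nexc; have vx : v != x by rewrite eq_sym.
have i1 a : inc (sc_e (1 : R) a a) := sc_e_incidence 1 (lexx a).
case: (eqVneq (b (sc_e 1 x x) (sc_e 1 v v) v x) 0) => // bxv.
have [vmin xmax] := bider_orth_support (i1 x) (i1 v)
  (sc_e_mul_neq hitv 1 1 (lexx x) (lexx v) xv)
  (sc_e_mul_neq hitv 1 1 (lexx v) (lexx x) vx) bxv.
by case: nexc; rewrite (xmax y xy) (vmin u uv).
Qed.

Lemma bider_sc_e_diag (r1 r2 : R) x y : chains_ge3 P -> (x <= y)%O -> x != y ->
  b (sc_e r1 x y) (sc_e r2 x y) x y = 0.
Proof.
move=> hch xy xNy; have yNx : y != x by rewrite eq_sym.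
case: (eqVneq (b (sc_e r1 x y) (sc_e r2 x y) x y) 0) => // bxy.
have [xmin ymax] := bider_orth_support (sc_e_incidence r1 xy) (sc_e_incidence r2 xy)
  (sc_e_mul_neq hitv _ _ xy xy yNx) (sc_e_mul_neq hitv _ _ xy xy yNx) bxy.
have [z [xz zy zNx zNy]] := chains_ge3_between hch xmin ymax xy xNy.
have xNz : x != z by rewrite eq_sym.
have yNz : y != z by rewrite eq_sym.
have ixz := sc_e_incidence r1 xz; have izy := sc_e_incidence (1 : R) zy.
have ig := sc_e_incidence r2 xy.
have -> : sc_e r1 x y = mul (sc_e r1 x z) (sc_e 1 z y).
  by rewrite (sc_e_mul hitv) // eqxx mulr1.
rewrite (biderMl ixz izy ig) /inc_add.
rewrite (inc_mul_sc_el hitv _ _ _ xz (bider_incidence izy ig)).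
rewrite (inc_mul_sc_er hitv _ _ _ zy (bider_incidence ixz ig)) !eqxx.
rewrite (bider_orth_nonmin izy ig (sc_e_mul_neq hitv _ _ zy xy yNx)
  (sc_e_mul_neq hitv _ _ xy zy yNz) _ xz xNz).
rewrite (bider_orth_nonmax ixz ig (sc_e_mul_neq hitv _ _ xz xy zNx)
  (sc_e_mul_neq hitv _ _ xy xz yNx) _ zy zNy).
by rewrite mulr0 mul0r addr0.
Qed.

End Biderivation.

Lemma is_biderivation_swap d (P : porderType d) (R : comPzRingType)
    (itv : P -> P -> seq P) (b : (P -> P -> R) -> (P -> P -> R) -> (P -> P -> R)) :
  is_biderivation itv b -> is_biderivation itv (fun f g => b g f).
Proof. by case=> hbI hbDl hbDr hbMl hbMr; split=> *; auto. Qed.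

Theorem mainTheorem12 (d : Order.disp_t) (P : porderType d) (R : comPzRingType)
  (itv : P -> P -> seq P) (hitv : interval_enum itv)
  (hconn : connected_poset P) (hch : chains_ge3 P)
  (b : (P -> P -> R) -> (P -> P -> R) -> (P -> P -> R))
  (hb : is_biderivation itv b)
  (r1 r2 : R) (x y u v : P)
  (hxy : (x <= y)%O) (huv : (u <= v)%O)
  (hxu : cmp x u) (hxv : cmp x v) (hyu : cmp y u) (hyv : cmp y v)
  (hxv' : x <> v) (hyu' : y <> u) :
  ~ (x = y /\ u = v /\ x <> u /\
     ((maximal_elt x /\ minimal_elt u) \/ (minimal_elt x /\ maximal_elt u))) ->
  forall p q, b (sc_e r1 x y) (sc_e r2 u v) p q = 0%R.
Proof.
move=> nexc p q; have hb' := is_biderivation_swap hb.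
have xNv : x != v by apply/eqP.
have uNy : u != y by apply/eqP => /esym.
have bxv0 : b (sc_e 1 x x) (sc_e 1 v v) v x = 0.
  apply: (bider_idem_corner hitv hb hxy huv xNv) => -[xy uv xmax umin].
  by apply: nexc; rewrite uv in umin *; do 3!split => //; left.
have byu0 : b (sc_e 1 y y) (sc_e 1 u u) y u = 0.
  apply: (bider_idem_corner hitv hb' huv hxy uNy) => -[uv xy umax xmin].
  by apply: nexc; rewrite -xy in hyu' xmin *; do 3!split => //; right.
have [pq|] := boolP ((p != x) || (q != v)).
  exact: (bider_sc_e_off_corner hitv hb r1 r2 hxy huv xNv bxv0 pq).
rewrite negb_or !negbK => /andP[/eqP-> /eqP->].
have [pq|] := boolP ((x != u) || (v != y)).
  exact: (bider_sc_e_off_corner hitv hb' r2 r1 huv hxy uNy byu0 pq).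
rewrite negb_or !negbK => /andP[/eqP uEx /eqP vEy]; rewrite -uEx vEy in hxv' *.
by apply: (bider_sc_e_diag hitv hb r1 r2 hch hxy); apply/eqP.
Qed.
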